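(* Let $\mathcal T$ be a pre-triangulated category. Then $\mathrm{fpc}(\mathcal T)\le cx(\mathcal T)$.
   Context: $\Bbbk$ is an algebraically closed field and $\mathcal T$ is $\Bbbk$-linear with suspension $\Sigma$. For a real number $d$, ${}_d\mathcal T=\{X\in\mathcal T:\lim_{n\to\infty}\dim_\Bbbk\mathrm{Hom}_{\mathcal T}(X,\Sigma^nY)/n^{d-1}=0\text{ for all }Y\in\mathcal T\}$, and $cx(\mathcal T)=\inf\{d:{}_d\mathcal T=\mathcal T\}$. An atomic object is $M$ with $\mathrm{Hom}(M,M)=\Bbbk$ and $\mathrm{Hom}(M,\Sigma^{-i}M)=0$ for $i>0$; an atomic set is a finite set $\phi=\{X_1,\dots,X_m\}$ of nonzero atomic objects with $\dim\mathrm{Hom}(X_i,X_j)=\delta_{ij}$. With $A(\phi,\Sigma^n)=(\dim\mathrm{Hom}(X_i,\Sigma^nX_j))_{i,j}$ and $\rho$ the spectral radius (entries $\pm\infty$ replaced by real variables $\pm x_{ij}$ with $\liminf$ as all $x_{ij}\to\infty$), $\mathrm{fpg}(\Sigma)=\sup_\phi\limsup_{n\to\infty}\log_n\rho(A(\phi,\Sigma^n))$ over atomic sets ($\log_n0=-\infty$), and $\mathrm{fpc}(\mathcal T)=\mathrm{fpg}(\Sigma)+1$. *)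

From HB Require Import structures.
From mathcomp Require Import all_boot all_order all_algebra.
From mathcomp Require Import all_classical all_reals all_analysis.
From mathcomp Require Import complex.
Set Implicit Arguments. Unset Strict Implicit. Unset Printing Implicit Defensive.
Import Order.TTheory GRing.Theory Num.Theory.
Local Open Scope ring_scope.
Local Open Scope classical_set_scope.

Record kcat (k : fieldType) := KCat {
  Obj :> Type;
  Hom : Obj -> Obj -> lmodType k;
  comp : forall X Y Z : Obj, Hom Y Z -> Hom X Y -> Hom X Z;
  idm : forall X : Obj, Hom X X
}.
Arguments Hom {k C} X Y : rename.
Arguments comp {k C X Y Z} g f : rename.
Arguments idm {k C} X : rename.

Section KcatNotions.
Variables (k : fieldType) (C : kcat k).

Definition is_iso (X Y : C) (f : Hom X Y) : Prop :=
  exists g : Hom Y X, comp g f = idm X /\ comp f g = idm Y.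

Definition is_zero_obj (Z : C) : Prop :=
  forall X : C, (forall f : Hom Z X, f = 0) /\ (forall f : Hom X Z, f = 0).
End KcatNotions.

Record pretriang (k : fieldType) := PreTriang {
  cat :> kcat k;
  Sig : cat -> cat;
  Sigm : forall X Y : cat, Hom X Y -> Hom (Sig X) (Sig Y);
  dist : forall X Y Z : cat, Hom X Y -> Hom Y Z -> Hom Z (Sig X) -> Prop;
  compA : forall (X Y Z W : cat) (f : Hom X Y) (g : Hom Y Z) (h : Hom Z W),
    comp h (comp g f) = comp (comp h g) f;
  comp1m : forall (X Y : cat) (f : Hom X Y), comp (idm Y) f = f;
  compm1 : forall (X Y : cat) (f : Hom X Y), comp f (idm X) = f;
  comp_linl : forall (X Y Z : cat) (a : k) (g g' : Hom Y Z) (f : Hom X Y),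
    comp (a *: g + g') f = a *: comp g f + comp g' f;
  comp_linr : forall (X Y Z : cat) (a : k) (g : Hom Y Z) (f f' : Hom X Y),
    comp g (a *: f + f') = a *: comp g f + comp g f';
  zero_ex : exists Z : cat, is_zero_obj Z;
  biprod_ex : forall X Y : cat, exists (P : cat) (i1 : Hom X P) (i2 : Hom Y P)
      (p1 : Hom P X) (p2 : Hom P Y),
    [/\ comp p1 i1 = idm X, comp p2 i2 = idm Y, comp p1 i2 = 0,
        comp p2 i1 = 0 & comp i1 p1 + comp i2 p2 = idm P];
  Sig_id : forall X : cat, Sigm (idm X) = idm (Sig X);
  Sig_comp : forall (X Y Z : cat) (g : Hom Y Z) (f : Hom X Y),
    Sigm (comp g f) = comp (Sigm g) (Sigm f);
  Sig_lin : forall (X Y : cat) (a : k) (f g : Hom X Y),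
    Sigm (a *: f + g) = a *: Sigm f + Sigm g;
  Sig_ff : forall X Y : cat, bijective (@Sigm X Y);
  Sig_ess : forall Y : cat, exists (X : cat) (f : Hom (Sig X) Y), is_iso f;
  TR1_iso : forall (X Y Z X' Y' Z' : cat)
      (f : Hom X Y) (g : Hom Y Z) (h : Hom Z (Sig X))
      (f' : Hom X' Y') (g' : Hom Y' Z') (h' : Hom Z' (Sig X'))
      (u : Hom X X') (v : Hom Y Y') (w : Hom Z Z'),
    dist f g h -> is_iso u -> is_iso v -> is_iso w ->
    comp v f = comp f' u -> comp w g = comp g' v ->
    comp (Sigm u) h = comp h' w -> dist f' g' h';
  TR1_id : forall X Z : cat, is_zero_obj Z ->
    dist (idm X) (0 : Hom X Z) (0 : Hom Z (Sig X));
  TR1_ext : forall (X Y : cat) (f : Hom X Y),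
    exists (Z : cat) (g : Hom Y Z) (h : Hom Z (Sig X)), dist f g h;
  TR2 : forall (X Y Z : cat) (f : Hom X Y) (g : Hom Y Z) (h : Hom Z (Sig X)),
    dist f g h <-> dist g h (- Sigm f);
  TR3 : forall (X Y Z X' Y' Z' : cat)
      (f : Hom X Y) (g : Hom Y Z) (h : Hom Z (Sig X))
      (f' : Hom X' Y') (g' : Hom Y' Z') (h' : Hom Z' (Sig X'))
      (u : Hom X X') (v : Hom Y Y'),
    dist f g h -> dist f' g' h' -> comp v f = comp f' u ->
    exists w : Hom Z Z', comp w g = comp g' v /\ comp (Sigm u) h = comp h' w
}.
Arguments Sig {k} T X : rename.
Arguments Sigm {k T X Y} f : rename.

(* Dimension of a (possibly infinite-dimensional) k-vector space,     *)
(* as an extended real: sup of sizes of linearly independent families *)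

Definition linindep (k : fieldType) (V : lmodType k) (s : seq V) : Prop :=
  forall c : 'I_(size s) -> k,
    \sum_(i < size s) c i *: s`_i = 0 -> forall i, c i = 0.

Definition edim (R : realType) (k : fieldType) (V : lmodType k) : \bar R :=
  ereal_sup [set ((size s)%:R)%:E | s in [set s : seq V | linindep s]].

Definition toC (R : realType) (r : R) : R[i] := Complex r 0.
Definition cmod (R : realType) (z : R[i]) : R :=
  Num.sqrt (complex.Re z ^+ 2 + complex.Im z ^+ 2).

Definition specrad (R : realType) (m : nat) (B : 'M[R]_m) : \bar R :=
  ereal_sup [set (cmod z)%:E |
               z in [set z : R[i] | eigenvalue (map_mx (@toC R) B) z]].

Definition subst_inf (R : realType) (m : nat) (A : 'M[\bar R]_m)
    (x : 'M[R]_m) : 'M[R]_m :=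
  \matrix_(i, j) match A i j with
                 | r%:E => r
                 | +oo%E => x i j
                 | -oo%E => - x i j
                 end.

(* rho(A) for A with possibly infinite entries: liminf of rho(subst_inf A x)
   as all x_ij -> +oo *)
Definition specrad_ext (R : realType) (m : nat) (A : 'M[\bar R]_m) : \bar R :=
  ereal_sup [set ereal_inf [set specrad (subst_inf A x) |
                            x in [set x : 'M[R]_m | forall i j, M < x i j]]
            | M in [set: R]].

Definition elogn (R : realType) (n : nat) (y : \bar R) : \bar R :=
  match y with
  | r%:E => if r == 0 then -oo%E else (ln r / ln (n%:R))%:E
  | +oo%E => +oo%E
  | -oo%E => -oo%E
  end.

Section Invariants.
Variables (R : realType) (k : fieldType) (T : pretriang k).

Definition Sign (n : nat) (X : T) : T := iter n (Sig T) X.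

(* M atomic: Hom(M,M) = k (one-dimensional) and Hom(M, Sigma^{-i} M) = 0
   for i > 0, where Sigma^{-i} M is any object N with Sigma^i N ~= M *)
Definition atomic (M : T) : Prop :=
  edim R (Hom M M) = 1%E /\
  forall (i : nat) (N : T), (0 < i)%N ->
    (exists f : Hom (Sign i N) M, is_iso f) -> forall g : Hom M N, g = 0.

Definition atomic_set (m : nat) (phi : 'I_m -> T) : Prop :=
  (forall i, ~ is_zero_obj (phi i) /\ atomic (phi i)) /\
  (forall i j, edim R (Hom (phi i) (phi j)) = (if i == j then 1 else 0)%:E).

Definition Amat (m : nat) (phi : 'I_m -> T) (n : nat) : 'M[\bar R]_m :=
  \matrix_(i, j) edim R (Hom (phi i) (Sign n (phi j))).

Definition fpg : \bar R :=
  ereal_sup [set y | exists (m : nat) (phi : 'I_m -> T), atomic_set phi /\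
     y = limn_esup (fun n => elogn n (specrad_ext (Amat phi n)))].

Definition fpc : \bar R := (fpg + 1)%E.

Definition in_dT (d : R) (X : T) : Prop :=
  forall Y : T,
    (fun n : nat => (edim R (Hom X (Sign n Y)) * ((n%:R `^ (d - 1))^-1)%:E)%E)
      @ \oo --> (0 : \bar R).

Definition cx : \bar R :=
  ereal_inf [set d%:E | d in [set d : R | forall X : T, in_dT d X]].

End Invariants.

(* If every object lies in _dT, each entry dim Hom(X_i, Sigma^n X_j) of A(phi, Sigma^n)
   is eventually finite and at most n^(d-1)/(m+1).  An eigenvalue of an m x m matrix
   has modulus at most m times the largest entry, so rho(A(phi, Sigma^n)) <= n^(d-1)
   for large n and its log_n is at most d - 1; hence fpg <= d - 1 for every such d. *)

From HB Require Import structures.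
From mathcomp Require Import all_boot all_order all_algebra.
From mathcomp Require Import all_classical all_reals all_analysis.
From mathcomp Require Import complex.
Set Implicit Arguments. Unset Strict Implicit. Unset Printing Implicit Defensive.
Import Order.TTheory GRing.Theory Num.Theory.
Local Open Scope ring_scope.
Local Open Scope classical_set_scope.
Local Open Scope complex_scope.
Local Open Scope ring_scope.

Section SpectralRadius.
Variable R : realType.

Lemma normc_toC (r : R) : `|toC r| = `|r|%:C.
Proof. by rewrite normc_def /= expr0n /= addr0 sqrtr_sqr. Qed.

Lemma normc_cmod (z : R[i]) : `|z| = (cmod z)%:C.
Proof. by rewrite normc_def. Qed.

Lemma cmod_eigenvalue_le m (B : 'M[R]_m) (b : R) (z : R[i]) :
  (forall i j, `|B i j| <= b) -> eigenvalue (map_mx (@toC R) B) z ->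
  cmod z <= m%:R * b.
Proof.
move=> Bb /eigenvalueP [v vB v_neq0].
pose S := \sum_j `|v 0 j|.
have S_gt0 : 0 < S.
  have [j vj_neq0] : exists j, v 0 j != 0.
    apply/existsP; apply: contraNT v_neq0 => /existsPn vj0.
    by apply/eqP/rowP => j; rewrite mxE; apply/eqP/negPn.
  rewrite /S (bigD1 j) //=; apply: (lt_le_trans (_ : 0 < `|v 0 j|)).
    by rewrite normr_gt0.
  by rewrite lerDl sumr_ge0.
have zvj_le j : `|z| * `|v 0 j| <= \sum_i `|v 0 i| * b%:C.
  have zvj : z * v 0 j = (v *m map_mx (@toC R) B) 0 j by rewrite vB mxE.
  rewrite -normrM zvj mxE.
  apply: (le_trans (ler_norm_sum _ _ _)); apply: ler_sum => i _.
  by rewrite normrM mxE normc_toC ler_wpM2l // lecR.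
have : `|z| * S <= (m%:R * b)%:C * S.
  rewrite /S mulr_sumr; apply: (le_trans (ler_sum _ (fun j _ => zvj_le j))).
  rewrite sumr_const card_ord -mulr_suml rmorphM rmorph_nat.
  by rewrite -[X in X <= _]mulr_natl mulrA mulrAC.
by rewrite ler_pM2r // normc_cmod lecR.
Qed.

Lemma specrad_le m (B : 'M[R]_m) (b : R) :
  (forall i j, `|B i j| <= b) -> (specrad B <= (m%:R * b)%:E)%E.
Proof.
by move=> Bb; apply: ge_ereal_sup => _ [z zB <-]; rewrite lee_fin; exact: cmod_eigenvalue_le.
Qed.

Lemma specrad_Ny_or_ge0 m (B : 'M[R]_m) : specrad B = -oo%E \/ (0 <= specrad B)%E.
Proof.
have [[z zB]|no_eig] := pselect (exists z, eigenvalue (map_mx (@toC R) B) z).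
  right; apply: (@le_trans _ _ (cmod z)%:E); first by rewrite lee_fin sqrtr_ge0.
  by apply: ereal_sup_ubound; exists z.
left; apply/ereal_sup_ninfty => _ [z zB <-]; case: no_eig; by exists z.
Qed.

Lemma subst_inf_EFin m (B : 'M[R]_m) (x : 'M[R]_m) : subst_inf (map_mx EFin B) x = B.
Proof. by apply/matrixP => i j; rewrite !mxE. Qed.

Lemma specrad_ext_EFin m (B : 'M[R]_m) : specrad_ext (map_mx EFin B) = specrad B.
Proof.
have const_inf (M : R) : [set specrad (subst_inf (map_mx EFin B) x) |
    x in [set x : 'M[R]_m | forall i j, M < x i j]] = [set specrad B].
  apply/seteqP; split => [_ [x _ <-]|_ ->]; first by rewrite subst_inf_EFin.
  exists (const_mx (M + 1)); last by rewrite subst_inf_EFin.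
  by move=> i j; rewrite mxE ltrDl ltr01.
rewrite /specrad_ext; under eq_imagel do rewrite const_inf ereal_inf1.
rewrite (_ : [set _ | _ in setT] = [set specrad B]) ?ereal_sup1 //.
by apply/seteqP; split => [_ [M _ <-]|_ ->] //; exists 0.
Qed.

End SpectralRadius.

Lemma elogn_le_powR (R : realType) (n : nat) (e : R) (y : \bar R) : (1 < n)%N ->
  y = -oo%E \/ (0 <= y)%E -> (y <= (n%:R `^ e)%:E)%E -> (elogn n y <= e%:E)%E.
Proof.
move=> n_gt1 [-> _|]; first by rewrite /= leNye.
case: y => [r||//] /=; last by rewrite leye_eq.
rewrite !lee_fin => r_ge0 r_le.
case: ifPn => [_|r_neq0]; first exact: leNye.
have ln_n_gt0 : 0 < ln (n%:R : R) by rewrite ln_gt0 // ltr1n.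
rewrite lee_fin ler_pdivrMr // -ln_powR ler_ln // posrE.
- by rewrite lt_def r_neq0.
- by rewrite powR_gt0 // ltr0n (ltn_trans _ n_gt1).
Qed.

Lemma limn_esup_le_near (R : realType) (u : (\bar R)^nat) (c : \bar R) :
  (\forall n \near \oo, (u n <= c)%E) -> (limn_esup u <= c)%E.
Proof.
case=> N _ u_le; rewrite limn_esup_lim (cvg_lim _ (@cvg_esups_inf _ u)) //.
apply: ge_ereal_inf; exists (esups u N); first by exists N.
by apply: ge_ereal_sup => _ [n Nn <-]; exact: u_le.
Qed.

Lemma cvg_scaled_near_le (R : realType) (u : nat -> \bar R) (e eps : R) :
  0 < eps -> (fun n => (u n * ((n%:R `^ e)^-1)%:E)%E) @ \oo --> 0%E ->
  \forall n \near \oo, exists r, u n = r%:E /\ `|r| <= eps * n%:R `^ e.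
Proof.
move=> eps_gt0 /fine_cvgP [fin_near /cvgr0_norm_lt small]; near=> n.
have n_pow_gt0 : 0 < n%:R `^ e :> R.
  by rewrite powR_gt0 // ltr0n; near: n; exact: nbhs_infty_gt.
have : `|fine (u n * ((n%:R `^ e)^-1)%:E)%E| < eps by near: n; exact: small.
have : (u n * ((n%:R `^ e)^-1)%:E)%E \is a fin_num by near: n.
case: (u n) => [r _||] /=.
- rewrite normrM normfV (gtr0_norm n_pow_gt0) ltr_pdivrMr // => r_lt.
  by exists r; split; last exact: ltW.
- by rewrite mulyr gtr0_sg ?invr_gt0 // mul1e.
- by rewrite mulNyr gtr0_sg ?invr_gt0 // mul1e.
Unshelve. all: by end_near.
Qed.

Section FrobeniusPerronGrowth.
Variables (R : realType) (k : fieldType) (T : pretriang k) (d : R).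
Hypothesis complexity_le : forall X : T, in_dT d X.

Lemma Amat_near_bound m (phi : 'I_m -> T) (eps : R) : 0 < eps ->
  \forall n \near \oo, exists B : 'M[R]_m,
    Amat R phi n = map_mx EFin B /\ forall i j, `|B i j| <= eps * n%:R `^ (d - 1).
Proof.
move=> eps_gt0.
have entries_le : \forall n \near \oo, forall i j, exists r,
    Amat R phi n i j = r%:E /\ `|r| <= eps * n%:R `^ (d - 1).
  apply: filter_forall => i; apply: filter_forall => j; under eq_near do rewrite mxE.
  exact: cvg_scaled_near_le eps_gt0 (complexity_le (phi i) (phi j)).
apply: filterS entries_le => n An_le.
exists (\matrix_(i, j) fine (Amat R phi n i j)); split=> [|i j].
  by apply/matrixP => i j; move: (An_le i j); rewrite !mxE => -[r [-> _]].
by rewrite mxE; have [r [-> r_le]] := An_le i j.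
Qed.

Lemma limn_esup_elogn_specrad_Amat_le m (phi : 'I_m -> T) :
  (limn_esup (fun n => elogn n (specrad_ext (Amat R phi n))) <= (d - 1)%:E)%E.
Proof.
have eps_gt0 : 0 < (m.+1%:R : R)^-1 by rewrite invr_gt0 ltr0n.
apply: limn_esup_le_near; near=> n.
have [B [-> B_le]] : exists B : 'M[R]_m, Amat R phi n = map_mx EFin B /\
    forall i j, `|B i j| <= (m.+1%:R)^-1 * n%:R `^ (d - 1).
  by near: n; exact: Amat_near_bound.
rewrite specrad_ext_EFin; apply: elogn_le_powR (specrad_Ny_or_ge0 B) _.
  by near: n; exact: nbhs_infty_gt.
apply: le_trans (specrad_le B_le) _; rewrite lee_fin mulrA ler_piMl ?powR_ge0 //.
by rewrite ler_pdivrMr ?ltr0n // mul1r ler_nat.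
Unshelve. all: by end_near.
Qed.

Lemma fpg_le : (fpg R T <= (d - 1)%:E)%E.
Proof.
by apply: ge_ereal_sup => _ [m [phi [_ ->]]]; exact: limn_esup_elogn_specrad_Amat_le.
Qed.

End FrobeniusPerronGrowth.

Theorem theorem8p3 (R : realType) (k : closedFieldType) (T : pretriang k) :
  (fpc R T <= cx R T)%E.
Proof.
apply: le_ereal_inf_tmp => _ [d complexity_le <-].
by rewrite /fpc -lee_suber_addr // -EFinB fpg_le.
Qed.
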